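(* Let $(S,\mathcal{A},\mu)$ be a complete, $\sigma$-finite measure space and $X$ an octahedral real Banach space. Then $L^1(\mu,X)$ and $L^\infty(\mu,X)$ are also octahedral.
   Context: A real Banach space $X$ is octahedral if for every finite-dimensional subspace $F$ of $X$ and every $\varepsilon>0$ there is $y\in S_X$ (the unit sphere) with $\|x+y\|\ge(1-\varepsilon)(\|x\|+1)$ for all $x\in F$. $L^1(\mu,X)$, $L^\infty(\mu,X)$ are the Lebesgue–Bochner spaces. *)

From HB Require Import structures.
From mathcomp Require Import all_boot all_order all_algebra.
From mathcomp Require Import all_classical all_reals all_analysis.
From mathcomp Require Import ess_sup_inf.
Set Implicit Arguments. Unset Strict Implicit. Unset Printing Implicit Defensive.
Import Order.TTheory GRing.Theory Num.Theory.
Import numFieldNormedType.Exports.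
Local Open Scope classical_set_scope.
Local Open Scope ring_scope.

(* Octahedrality of a real normed space X: for every finite-dimensional
   subspace F = span (e 0, ..., e (n-1)) and every eps > 0 there is y in the
   unit sphere with ||x + y|| >= (1 - eps)(||x|| + 1) for all x in F. *)
Definition octahedral (R : realType) (X : normedModType R) : Prop :=
  forall (n : nat) (e : 'I_n -> X) (eps : R), 0 < eps ->
  exists y : X, `|y| = 1 /\
    forall c : 'I_n -> R,
      (1 - eps) * (`|\sum_(i < n) c i *: e i| + 1)
        <= `|\sum_(i < n) c i *: e i + y|.

(* Octahedrality of a space of (classes of) functions T -> X, given as the
   set V of its representatives together with the (semi)norm N on them;
   N of a representative is the norm of its equivalence class, so this is
   exactly octahedrality of the quotient Banach space. *)
Definition octahedral_fun (T : Type) (R : realType) (X : normedModType R)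
    (V : set (T -> X)) (N : (T -> X) -> R) : Prop :=
  forall (n : nat) (e : 'I_n -> T -> X), (forall i, V (e i)) ->
  forall eps : R, 0 < eps ->
  exists y : T -> X, V y /\ N y = 1 /\
    forall c : 'I_n -> R,
      (1 - eps) * (N (fun t => \sum_(i < n) c i *: e i t) + 1)
        <= N (fun t => \sum_(i < n) c i *: e i t + y t).

Section Bochner.
Context (d : measure_display) (T : measurableType d) (R : realType)
  (X : normedModType R) (mu : {measure set T -> \bar R}).

Definition simple_fun (f : T -> X) : Prop :=
  finite_set (range f) /\ forall x : X, measurable (f @^-1` [set x]).

Definition strongly_measurable (f : T -> X) : Prop :=
  exists s : nat -> T -> X, (forall k, simple_fun (s k)) /\
    (\forall t \ae mu, (fun k => s k t) @ \oo --> f t).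

Definition L1_norm (f : T -> X) : R := fine (\int[mu]_t (`|f t|)%:E).
Definition L1_space : set (T -> X) :=
  [set f | strongly_measurable f /\ (\int[mu]_t (`|f t|)%:E < +oo)%E].

Definition Linfty_norm (f : T -> X) : R :=
  fine (ess_sup mu (fun t => (`|f t|)%:E)).
Definition Linfty_space : set (T -> X) :=
  [set f | strongly_measurable f /\ (ess_sup mu (fun t => (`|f t|)%:E) < +oo)%E].

End Bochner.

From mathcomp Require Import all_boot all_order all_algebra.
From mathcomp Require Import all_classical all_reals all_analysis.
From mathcomp Require Import ess_sup_inf measurable_realfun ring lra.
Import Order.TTheory GRing.Theory Num.Theory.
Import numFieldNormedType.Exports.
Local Open Scope classical_set_scope.
Local Open Scope ring_scope.
Set Implicit Arguments. Unset Strict Implicit. Unset Printing Implicit Defensive.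

(* Octahedrality of a space of functions reduces, by induction on
   the number n of given functions e_1, ..., e_n, to families whose coefficient
   seminorm c |-> N (sum_i c_i e_i) dominates k * sum_i |c_i| for some k > 0
   (compactness of the unit sphere of R^n): otherwise a nontrivial combination
   is null and one e_i can be dropped.  For such a family, approximate every
   e_i a.e. by simple functions.  From a measurable first stage K(t) on, the
   approximants at t stay delta-close to e_i(t); their finitely many values span
   a finite-dimensional subspace of X, in which octahedrality of X provides a
   unit vector z_(K t).  Then y = z o K (for L^infty), resp.
   y = mu(A)^-1 1_A z o K for a set A of finite positive measure (for L^1),
   satisfies the octahedral inequality at almost every t up to an error
   2 delta sum_i |c_i|.  This survives the essential supremum, resp. the
   integral, and is absorbed by the coercivity bound once delta is taken
   proportional to eps * k. *)

Lemma normr_rV_entry_le (R : realType) n (v : 'rV[R]_n) i : `|v ord0 i| <= `|v|.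
Proof.
have /mapP[j _ ->] : `|v ord0 i| \in [seq `|v x.1 x.2| | x : 'I_1 * 'I_n].
  by apply/mapP; exists (ord0, i) => //=; rewrite mem_enum.
by rewrite [leRHS]/Num.norm /= mx_normrE; apply/bigmax_geP; right; exists j.
Qed.

Lemma sum_normr_rV_le (R : realType) n (v : 'rV[R]_n) :
  \sum_i `|v ord0 i| <= n%:R * `|v|.
Proof.
rewrite mulr_natl -[X in _ *+ X]card_ord -sumr_const.
by apply: ler_sum => i _; exact: normr_rV_entry_le.
Qed.

Lemma compact_rV_unit_sphere (R : realType) n : compact [set v : 'rV[R]_n | `|v| = 1].
Proof.
apply: bounded_closed_compact; first by exists 1; split => // M M1 v /= ->; exact: ltW.
rewrite (_ : [set v | _] = Num.norm @^-1` [set 1]) //.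
by apply: preimage_closed; [move=> v _; exact: norm_continuous|exact: closed_eq].
Qed.

Lemma rV_unit_sphere_neq0 (R : realType) n : (0 < n)%N ->
  [set v : 'rV[R]_n | `|v| = 1] !=set0.
Proof.
move=> n_gt0; pose u : 'rV[R]_n := const_mx 1.
have u_neq0 : u != 0.
  apply/eqP => /matrixP /(_ ord0 (Ordinal n_gt0)); rewrite !mxE => /eqP.
  by rewrite oner_eq0.
by exists (`|u|^-1 *: u); exact: normfZV.
Qed.

Section SeminormOnCoefficients.
Variables (R : realType) (n : nat) (p : ('I_n -> R) -> R).
Hypothesis pD : forall c c', p (fun i => c i + c' i) <= p c + p c'.
Hypothesis pZ : forall a c, p (fun i => a * c i) = `|a| * p c.
Variable L : R.
Hypothesis L0 : 0 <= L.
Hypothesis pL : forall c, p c <= L * \sum_i `|c i|.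

Lemma seminorm_ge0 c : 0 <= p c.
Proof.
have p0 : p (fun _ => 0) = 0.
  by have := pZ 0 (fun _ => 0); under eq_fun do rewrite mul0r; rewrite normr0 mul0r.
have := pD c (fun i => -1 * c i); rewrite pZ normrN normr1 mul1r.
by under eq_fun do rewrite mulN1r subrr; rewrite p0; lra.
Qed.

Lemma seminorm_subr_le c c' : p c - p c' <= p (fun i => c i - c' i).
Proof.
rewrite lerBlDl; apply: le_trans (pD _ _); rewrite le_eqVlt; apply/orP; left.
by apply/eqP; congr p; apply: funext => i; rewrite addrCA subrr addr0.
Qed.

Let q (v : 'rV[R]_n) := p (fun i => v ord0 i).

Lemma seminorm_rV_lipschitz v w : `|q v - q w| <= L * n%:R * `|v - w|.
Proof.
suff le v' w' : q v' - q w' <= L * n%:R * `|v' - w'|.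
  by rewrite ler_norml le andbT lerNl opprB distrC le.
apply: le_trans (seminorm_subr_le _ _) _; apply: le_trans (pL _) _.
rewrite -mulrA ler_wpM2l //; apply: le_trans (sum_normr_rV_le (v' - w')).
by apply: ler_sum => i _; rewrite !mxE.
Qed.

Lemma seminorm_rV_continuous : continuous q.
Proof.
move=> v; apply/(@cvgrPdist_le _ _ _ _ (nbhs_filter v)) => eps eps0.
have C0 : 0 < L * n%:R + 1 by rewrite ltr_wpDl // mulr_ge0.
near=> w; apply: le_trans (seminorm_rV_lipschitz v w) _.
apply: (@le_trans _ _ ((L * n%:R + 1) * `|v - w|)); first by rewrite ler_wpM2r // lerDl.
rewrite mulrC -ler_pdivlMr //; near: w.
by apply: (cvgrPdist_le _ _).1 (@cvg_id _ (nbhs v)) _ _; rewrite divr_gt0.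
Unshelve. all: by end_near.
Qed.

Lemma seminorm_coercive_or_degenerate :
  (exists2 k, 0 < k & forall c, k * \sum_i `|c i| <= p c) \/
  (exists2 c, exists j, c j != 0 & p c = 0).
Proof.
have sum_le (c : 'I_n -> R) : \sum_i `|c i| <= n%:R * `|\row_i c i|.
  by have := sum_normr_rV_le (\row_i c i); under eq_bigr do rewrite mxE.
have [n0|n_gt0] := posnP n.
  left; exists 1 => // c; apply: le_trans _ (seminorm_ge0 c).
  by rewrite mul1r; apply: le_trans (sum_le c) _; rewrite [X in X%:R]n0 mul0r.
have [v0 /[!inE] Sv0 v0_min] := EVT_min_rV (rV_unit_sphere_neq0 _ n_gt0)
  (@compact_rV_unit_sphere R n) (continuous_subspaceT seminorm_rV_continuous).
have [q_gt0|q_le0] := ltP 0 (q v0); [left|right].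
  exists (q v0 / n%:R) => [|c]; first by rewrite divr_gt0 ?ltr0n.
  have v0_le : q v0 * `|\row_i c i| <= p c.
    have [->|v_neq0] := eqVneq (\row_i c i) 0.
      by rewrite normr0 mulr0 seminorm_ge0.
    have := v0_min _ (mem_set (normfZV v_neq0)).
    have -> : q (`|\row_i c i|^-1 *: \row_i c i) = `|\row_i c i|^-1 * p c.
      rewrite -[X in X * _]ger0_norm ?invr_ge0 // -pZ.
      by congr p; apply: funext => i; rewrite !mxE.
    by rewrite ler_pdivlMl ?normr_gt0 // mulrC.
  apply: le_trans v0_le; rewrite mulrAC ler_pdivrMr ?ltr0n //.
  by rewrite -mulrA (ler_wpM2l (ltW q_gt0)) // mulrC.
exists (fun i => v0 ord0 i); last by apply/eqP; rewrite eq_le q_le0 seminorm_ge0.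
have v0_neq0 : v0 != 0 by rewrite -normr_eq0 Sv0 oner_eq0.
apply: contraNP v0_neq0 => /forallNP v0_eq0.
by apply/eqP/rowP => j; rewrite mxE; apply/eqP/negPn/negP; exact: v0_eq0.
Qed.

End SeminormOnCoefficients.

Definition lincomb (T : Type) (R : pzRingType) (X : lmodType R) n
    (c : 'I_n -> R) (e : 'I_n -> T -> X) : T -> X :=
  fun t => \sum_(i < n) c i *: e i t.

Lemma lincombE (T : Type) (R : pzRingType) (X : lmodType R) n
    (c : 'I_n -> R) (e : 'I_n -> T -> X) :
  lincomb c e = \sum_(i < n) c i *: e i.
Proof. by rewrite fct_sumE. Qed.

Lemma lincomb_eliminate (R : fieldType) (X : lmodType R) m
    (x : 'I_m.+1 -> X) (c0 c : 'I_m.+1 -> R) j : c0 j != 0 ->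
  \sum_i c i *: x i =
    \sum_(i < m) (c (lift j i) - c j / c0 j * c0 (lift j i)) *: x (lift j i)
    + (c j / c0 j) *: \sum_i c0 i *: x i.
Proof.
move=> c0j; set a := c j / c0 j.
have -> : \sum_i c i *: x i = \sum_i (c i - a * c0 i) *: x i + \sum_i (a * c0 i) *: x i.
  by rewrite -big_split; apply: eq_bigr => i _ /=; rewrite -scalerDl subrK.
rewrite (bigD1_ord j) //= divfK // subrr scale0r add0r scaler_sumr.
by congr (_ + _); apply: eq_bigr => i _; rewrite scalerA.
Qed.

Section FunctionSeminorm.
Variables (T : Type) (R : realType) (X : normedModType R).
Variables (V : set (T -> X)) (N : (T -> X) -> R).

Definition l1_coercive n (e : 'I_n -> T -> X) : Prop :=
  exists2 k, 0 < k & forall c, k * \sum_i `|c i| <= N (lincomb c e).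

Definition octahedral_fun_witness n (e : 'I_n -> T -> X) (eps : R) y : Prop :=
  V y /\ N y = 1 /\ forall c : 'I_n -> R,
    (1 - eps) * (N (lincomb c e) + 1) <= N (fun t => lincomb c e t + y t).

Hypothesis V0 : V (fun _ => 0).
Hypothesis VD : forall f g, V f -> V g -> V (fun t => f t + g t).
Hypothesis VZ : forall (a : R) f, V f -> V (fun t => a *: f t).
Hypothesis ND : forall f g, V f -> V g -> N (fun t => f t + g t) <= N f + N g.
Hypothesis NZ : forall (a : R) f, V f -> N (fun t => a *: f t) = `|a| * N f.

Lemma lincomb_in n (c : 'I_n -> R) e : (forall i, V (e i)) -> V (lincomb c e).
Proof.
by move=> Ve; rewrite lincombE; apply: big_ind => // i _; exact: VZ.
Qed.

Lemma fun_seminorm0 : N (fun _ => 0) = 0.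
Proof. by have := NZ 0 V0; rewrite normr0 mul0r; under eq_fun do rewrite scale0r. Qed.

Lemma fun_seminorm_ge0 f : V f -> 0 <= N f.
Proof.
move=> Vf; have := ND Vf (VZ (-1) Vf); rewrite NZ // normrN normr1 mul1r.
by under eq_fun do rewrite scaleN1r subrr; rewrite fun_seminorm0; lra.
Qed.

Lemma fun_seminorm_addr_null u w : V u -> V w -> N w = 0 ->
  N (fun t => u t + w t) = N u.
Proof.
move=> Vu Vw Nw; apply/eqP; rewrite eq_le; apply/andP; split.
  by apply: le_trans (ND Vu Vw) _; rewrite Nw addr0.
have := ND (VD Vu Vw) (VZ (-1) Vw); rewrite NZ // normrN normr1 mul1r Nw addr0.
by under eq_fun do rewrite scaleN1r addrK.
Qed.

Lemma fun_seminorm_lincomb_le n (c : 'I_n -> R) e : (forall i, V (e i)) ->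
  N (lincomb c e) <= \sum_i `|c i| * N (e i).
Proof.
move=> Ve; rewrite lincombE.
suff [] : V (\sum_i c i *: e i) /\ N (\sum_i c i *: e i) <= \sum_i `|c i| * N (e i) by [].
elim/big_rec2: _ => [|i y f _ [Vf Nf]]; first by rewrite fun_seminorm0.
split; first exact: VD (VZ _ (Ve i)) Vf.
by apply: le_trans (ND (VZ _ (Ve i)) Vf) _; rewrite NZ // lerD2l.
Qed.

Lemma lincomb_coercive_or_degenerate n (e : 'I_n -> T -> X) :
  (forall i, V (e i)) ->
  l1_coercive e \/ exists2 c, (exists j, c j != 0) & N (lincomb c e) = 0.
Proof.
move=> Ve.
apply: (@seminorm_coercive_or_degenerate _ _ (fun c => N (lincomb c e)) _ _ (\sum_i N (e i))).
- move=> c c'; apply: le_trans (ND (lincomb_in c Ve) (lincomb_in c' Ve)).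
  rewrite le_eqVlt; apply/orP; left; apply/eqP; congr N; apply: funext => t.
  by rewrite /lincomb -big_split; apply: eq_bigr => i _; rewrite scalerDl.
- move=> a c; rewrite -NZ; last exact: lincomb_in.
  congr N; apply: funext => t.
  by rewrite /lincomb scaler_sumr; apply: eq_bigr => i _; rewrite scalerA.
- by apply: sumr_ge0 => i _; exact: fun_seminorm_ge0.
move=> c; apply: le_trans (fun_seminorm_lincomb_le c Ve) _.
rewrite mulr_sumr; apply: ler_sum => i _; rewrite mulrC ler_wpM2r //.
rewrite (bigD1 i) //= lerDl; apply: sumr_ge0 => k _; exact: fun_seminorm_ge0.
Qed.

Lemma octahedral_fun_witness_le n (e : 'I_n -> T -> X) eps eps' y :
  (forall i, V (e i)) -> eps' <= eps ->
  octahedral_fun_witness e eps' y -> octahedral_fun_witness e eps y.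
Proof.
move=> Ve le_eps [Vy [Ny wy]]; split=> //; split=> // c.
apply: le_trans (wy c); rewrite ler_wpM2r ?lerD2l ?lerN2 //.
by rewrite addr_ge0 // fun_seminorm_ge0 //; exact: lincomb_in.
Qed.

Hypothesis coercive_witness : forall n (e : 'I_n -> T -> X),
  (forall i, V (e i)) -> l1_coercive e ->
  forall eps, 0 < eps <= 1 -> exists y, octahedral_fun_witness e eps y.

Lemma octahedral_fun_of_coercive : octahedral_fun V N.
Proof.
move=> n e Ve eps eps0.
have from_coercive m (e' : 'I_m -> T -> X) : (forall i, V (e' i)) ->
    l1_coercive e' -> exists y, octahedral_fun_witness e' eps y.
  move=> Ve' ce'; have [|y wy] := coercive_witness Ve' ce' (eps := Num.min eps 1).
    by rewrite lt_min eps0 ltr01 ge_min lexx orbT.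
  by exists y; apply: octahedral_fun_witness_le wy; rewrite // ge_min lexx.
suff : exists y, octahedral_fun_witness e eps y by [].
elim: n e Ve => [|m IH] e Ve.
  by have [|[c [[]]]] := lincomb_coercive_or_degenerate Ve; first exact: from_coercive.
have [|[c0 [j c0j] Nc0]] := lincomb_coercive_or_degenerate Ve.
  exact: from_coercive.
(* [c0] is a null combination with [c0 j != 0], so every combination of the
   [e i] differs from one of the [e (lift j i)] by a null function. *)
pose e' i := e (lift j i).
have [y [Vy [Ny wy]]] := IH e' (fun i => Ve _).
exists y; split=> //; split=> // c; set a := c j / c0 j.
pose c' i := c (lift j i) - a * c0 (lift j i).
have Vnull : V (fun t => a *: lincomb c0 e t) := VZ a (lincomb_in c0 Ve).
have Nnull : N (fun t => a *: lincomb c0 e t) = 0.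
  by rewrite NZ; [rewrite -[X in N X]/(lincomb c0 e) Nc0 mulr0|exact: lincomb_in].
have -> : lincomb c e = fun t => lincomb c' e' t + a *: lincomb c0 e t.
  by apply: funext => t; exact: lincomb_eliminate.
have Vc' : V (lincomb c' e') := lincomb_in c' (fun i => Ve _).
rewrite fun_seminorm_addr_null //; under eq_fun do rewrite addrAC.
by rewrite fun_seminorm_addr_null //; exact: VD.
Qed.

End FunctionSeminorm.

Section SimpleFunctions.
Context d (T : measurableType d) (R : realType).

Lemma simple_fun_preimage (X : normedModType R) (f : T -> X) B :
  simple_fun f -> measurable (f @^-1` B).
Proof.
move=> [f_fin f_meas].
have -> : f @^-1` B = \bigcup_(x in range f `&` B) f @^-1` [set x].
  apply/seteqP; split => [t Bt|t [x [_ Bx] /= ->]] //.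
  by exists (f t) => //; split => //; exists t.
by apply: fin_bigcup_measurable => [|x _]; [exact: finite_setIl|exact: f_meas].
Qed.

Lemma simple_fun_cst (X : normedModType R) (x : X) : simple_fun (fun _ : T => x).
Proof.
split=> [|y]; last by rewrite preimage_cst; case: ifP.
by apply: sub_finite_set (finite_set1 x) => y [t _ <-].
Qed.

Lemma simple_fun_indic (A : set T) : measurable A -> simple_fun (\1_A : T -> R).
Proof.
move=> mA; split=> [|x]; last by rewrite -[_ @^-1` _]setTI; exact: measurable_indic.
apply: sub_finite_set (finite_set2 0 1) => _ [t _ <-].
by rewrite indicE; case: (t \in A); [right|left].
Qed.

Lemma simple_fun_map2 (X1 X2 Y : normedModType R) (op : X1 -> X2 -> Y)
    (f : T -> X1) (g : T -> X2) :
  simple_fun f -> simple_fun g -> simple_fun (fun t => op (f t) (g t)).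
Proof.
move=> sf sg; split.
  apply: sub_finite_set (finite_image2 op sf.1 sg.1) => _ [t _ <-].
  by exists (f t); [exists t|exists (g t); [exists t|]].
move=> y; have -> : (fun t => op (f t) (g t)) @^-1` [set y] =
    \bigcup_(a in range f) (f @^-1` [set a] `&` g @^-1` [set b | op a b = y]).
  apply/seteqP; split => [t /= <-|t [a _ /= [-> //]]].
  by exists (f t); [exists t|].
apply: fin_bigcup_measurable => [|a _]; first exact: sf.1.
by apply: measurableI; [exact: sf.2|exact: simple_fun_preimage].
Qed.

End SimpleFunctions.

Section StronglyMeasurable.
Context d (T : measurableType d) (R : realType) (mu : {measure set T -> \bar R}).

Lemma strongly_measurable_simple (X : normedModType R) (f : T -> X) :
  simple_fun f -> strongly_measurable mu f.
Proof. by move=> sf; exists (fun _ => f); split=> //; apply: nearW => t; exact: cvg_cst. Qed.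

Lemma strongly_measurable_map2 (X1 X2 Y : normedModType R) (op : X1 -> X2 -> Y)
    (f : T -> X1) (g : T -> X2) :
  continuous (fun p : X1 * X2 => op p.1 p.2) ->
  strongly_measurable mu f -> strongly_measurable mu g ->
  strongly_measurable mu (fun t => op (f t) (g t)).
Proof.
move=> op_cont [s [ss s_cvg]] [s' [ss' s'_cvg]].
exists (fun k t => op (s k t) (s' k t)); split=> [k|]; first exact: simple_fun_map2.
apply: filterS2 s_cvg s'_cvg => t fs gs.
exact: continuous_cvg (op_cont (f t, g t)) (cvg_pair fs gs).
Qed.

Lemma strongly_measurable_nat_valued (X : normedModType R) (K : T -> nat) (z : nat -> X) :
  (forall k, measurable (K @^-1` [set k])) -> strongly_measurable mu (fun t => z (K t)).
Proof.
move=> K_meas; exists (fun M t => z (minn (K t) M)); split.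
  move=> M; split.
    apply: sub_finite_set (finite_image z (finite_II M.+1)) => _ [t _ <-].
    by exists (minn (K t) M) => //=; rewrite ltnS geq_minr.
  move=> x; have -> : (fun t => z (minn (K t) M)) @^-1` [set x] =
      \bigcup_(k in [set k | z (minn k M) = x]) K @^-1` [set k].
    by apply/seteqP; split => [t <-|t [k /= <- ->]] //; exists (K t).
  by apply: bigcup_measurable => k _; exact: K_meas.
apply: nearW => t; apply: cvg_near_cst.
by near=> M; rewrite (minn_idPl _) //; near: M; exact: nbhs_infty_ge.
Unshelve. all: by end_near.
Qed.

Lemma measurable_normr_strongly_measurable (X : normedModType R) (f : T -> X) :
  measure_is_complete mu -> strongly_measurable mu f ->
  measurable_fun setT (fun t => `|f t|).
Proof.
move=> mu_complete [s [ss s_cvg]]; apply/measurable_EFinP.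
have s_meas k : measurable_fun setT (fun t => (`|s k t|)%:E).
  apply/measurable_EFinP => _ B mB; rewrite setTI.
  exact: (simple_fun_preimage [set y | B `|y|] (ss k)).
apply: (ae_measurable_fun mu_complete _ (measurable_fun_limn_esup s_meas)).
apply: filterS s_cvg => t st _ /=.
have norm_cvg : (fun k => (`|s k t|)%:E) @ \oo --> (`|f t|)%:E.
  by apply: cvg_EFin; [exact: nearW|exact: cvg_norm].
by rewrite is_cvg_limn_esupE; [exact: cvg_lim|exact: cvgP norm_cvg].
Qed.

End StronglyMeasurable.

Section OctahedralWitness.
Variables (R : realType) (X : normedModType R).

Definition octahedral_witness n (u : 'I_n -> X) (eps : R) (z : X) : Prop :=
  `|z| = 1 /\ forall b : 'I_n -> R,
    (1 - eps) * (`|\sum_i b i *: u i| + 1) <= `|\sum_i b i *: u i + z|.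

Lemma octahedral_witness_scale n (u : 'I_n -> X) eps z :
  0 <= eps <= 1 -> octahedral_witness u eps z ->
  forall b lam, 0 <= lam ->
  (1 - eps) * (`|\sum_i b i *: u i| + lam) <= `|\sum_i b i *: u i + lam *: z|.
Proof.
move=> /andP[eps0 eps1] [_ wz] b lam; rewrite le_eqVlt => /predU1P[<-|lam0].
  by rewrite scale0r !addr0 ler_piMl // lerBlDr lerDl.
have := wz (fun i => lam^-1 * b i).
have -> : \sum_i lam^-1 * b i *: u i = lam^-1 *: \sum_i b i *: u i.
  by rewrite scaler_sumr; apply: eq_bigr => i _; rewrite scalerA.
have -> : lam^-1 *: \sum_i b i *: u i + z = lam^-1 *: (\sum_i b i *: u i + lam *: z).
  by rewrite scalerDr scalerA mulVf ?gt_eqF // scale1r.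
rewrite !normrZ gtr0_norm ?invr_gt0 // => le_lam.
have := ler_wpM2l (ltW lam0) le_lam.
rewrite [X in _ <= X]mulrA divff ?gt_eqF // mul1r; apply: le_trans.
by rewrite le_eqVlt; apply/orP; left; apply/eqP; field; rewrite gt_eqF.
Qed.

Lemma lincomb_mem_span (w : seq X) n (v : 'I_n -> X) (c : 'I_n -> R) :
  (forall i, v i \in w) ->
  exists b : 'I_(size w) -> R, \sum_i c i *: v i = \sum_j b j *: nth 0 w j.
Proof.
elim: n v c => [|n IH] v c w_v.
  by exists (fun _ => 0); rewrite big_ord0 big1 // => j _; rewrite scale0r.
rewrite big_ord_recr /=.
have [b ->] := IH (fun i => v (widen_ord (leqnSn n) i))
   (fun i => c (widen_ord (leqnSn n) i)) (fun i => w_v _).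
have w_last : (index (v ord_max) w < size w)%N by rewrite index_mem.
exists (fun j => b j + (if j == Ordinal w_last then c ord_max else 0)).
under [RHS]eq_bigr do rewrite scalerDl.
rewrite big_split /=; congr (_ + _).
rewrite (bigD1 (Ordinal w_last)) //= eqxx nth_index //.
by rewrite big1 ?addr0 // => j /negPf ->; rewrite scale0r.
Qed.

Lemma octahedral_ineq_perturb eps (F G z : X) lam D :
  0 <= eps <= 1 -> (1 - eps) * (`|G| + lam) <= `|G + lam *: z| ->
  `|F - G| <= D -> (1 - eps) * (`|F| + lam) <= `|F + lam *: z| + 2 * D.
Proof.
move=> /andP[eps0 eps1] octG FG.
have F_le : `|F| <= `|G| + D by have := ler_normD (F - G) G; rewrite subrK; lra.
have G_le : `|G + lam *: z| <= `|F + lam *: z| + D.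
  have := ler_normD (G + lam *: z - (F + lam *: z)) (F + lam *: z).
  by rewrite subrK opprD addrACA subrr addr0 -opprB normrN; lra.
have : (1 - eps) * `|F| <= (1 - eps) * (`|G| + D) by rewrite ler_wpM2l // subr_ge0.
have : (1 - eps) * D <= D.
  by rewrite ler_piMl ?(le_trans (normr_ge0 _) FG) // lerBlDr lerDl.
by move: octG; rewrite !mulrDr; lra.
Qed.

Lemma octahedral_witness_approx (w : seq X) eps z n (x s : 'I_n -> X) delta :
  0 <= eps <= 1 -> octahedral_witness (fun j : 'I_(size w) => nth 0 w j) eps z ->
  (forall i, s i \in w) -> (forall i, `|x i - s i| <= delta) ->
  forall c lam, 0 <= lam ->
  (1 - eps) * (`|\sum_i c i *: x i| + lam) <=
    `|\sum_i c i *: x i + lam *: z| + 2 * (delta * \sum_i `|c i|).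
Proof.
move=> eps01 wz w_s xs c lam lam0; have [b sE] := lincomb_mem_span c w_s.
apply: (@octahedral_ineq_perturb _ _ (\sum_i c i *: s i) _ _ _ eps01).
  by rewrite sE; exact: octahedral_witness_scale.
rewrite -sumrB mulr_sumr; apply: le_trans (ler_norm_sum _ _ _) _.
by apply: ler_sum => i _; rewrite -scalerBr normrZ mulrC ler_wpM2r.
Qed.

End OctahedralWitness.

Section EventuallyStable.
Variables (R : realType) (X : normedModType R).

Lemma cvg_stable_near (u : nat -> X) (l : X) delta : u @ \oo --> l -> 0 < delta ->
  \forall k \near \oo, forall m, (k <= m)%N -> `|u m - u k| <= delta.
Proof.
move=> /cvgrPdist_le u_cvg delta0.
have [N _ uN] : \forall m \near \oo, `|l - u m| <= delta / 2.
  by apply: u_cvg; rewrite divr_gt0.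
exists N => // k /= Nk m km; apply: le_trans (ler_distD l _ _) _.
by rewrite (splitr delta) distrC lerD // uN //= (leq_trans Nk).
Qed.

Lemma cvg_stable_dist_le (u : nat -> X) (l : X) delta k : u @ \oo --> l ->
  (forall m, (k <= m)%N -> `|u m - u k| <= delta) -> `|l - u k| <= delta.
Proof.
move=> u_cvg u_stable.
have norm_cvg : (fun m => `|u m - u k|) @ \oo --> `|l - u k|.
  by apply: cvg_norm; apply: cvgB => //; exact: cvg_cst.
have near_le : \forall m \near \oo, `|u m - u k| <= delta.
  by near=> m; apply: u_stable; near: m; exact: nbhs_infty_ge.
by rewrite -(cvg_lim _ norm_cvg) //; apply: limr_le => //; exact: cvgP norm_cvg.
Unshelve. all: by end_near.
Qed.

End EventuallyStable.

Lemma measurable_first_index d (T : measurableType d) (B : nat -> set T) :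
  (forall k, measurable (B k)) ->
  exists K : T -> nat, (forall k, measurable (K @^-1` [set k])) /\
    forall t, (exists k, B k t) -> B (K t) t.
Proof.
move=> mB; pose K t := xget 0%N [set k | B k t /\ forall j, B j t -> (k <= j)%N].
have K_min t : (exists k, B k t) -> B (K t) t /\ forall j, B j t -> (K t <= j)%N.
  move=> [k Bk]; apply: (@xgetPex _ 0%N [set k | B k t /\ forall j, B j t -> (k <= j)%N]).
  have ex : exists k, `[< B k t >] by exists k; exact/asboolP.
  case: (ex_minnP ex) => m /asboolP Bm m_min.
  by exists m; split => // j /asboolP /m_min.
have K0 t : ~ (exists k, B k t) -> K t = 0%N.
  by move=> nB; apply: xgetPN => k [Bk _]; apply: nB; exists k.
exists K; split => [k|t /K_min[]//].
have -> : K @^-1` [set k] = (B k `\` \bigcup_(j in [set j | (j < k)%N]) B j)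
    `|` (if k == 0%N then ~` \bigcup_j B j else set0).
  apply/seteqP; split => t /=.
    move=> <-{k}; have [exB|nB] := pselect (exists k, B k t).
      have [BK Kmin] := K_min t exB; left; split => // -[j /= jK Bj].
      by have := Kmin j Bj; rewrite leqNgt jK.
    by right; rewrite K0 //= => -[j _ Bj]; apply: nB; exists j.
  case=> [[Bk k_min]|].
    have [_ Kmin] := K_min t (ex_intro _ k Bk).
    apply/eqP; rewrite eqn_leq Kmin // leqNgt; apply/negP => Kk.
    by apply: k_min; exists (K t) => //; exact: (K_min t (ex_intro _ k Bk)).1.
  by case: eqP => [-> nB|_ //]; apply: K0 => -[j Bj]; apply: nB; exists j.
apply: measurableU; first by apply: measurableD => //; exact: bigcup_measurable.
by case: ifP => _ //; apply: measurableC; exact: bigcup_measurable.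
Qed.

Section OctahedralSelector.
Context d (T : measurableType d) (R : realType) (X : normedModType R)
  (mu : {measure set T -> \bar R}).

Lemma octahedral_selector n (e : 'I_n -> T -> X) (eps delta : R) :
  octahedral X -> 0 < eps <= 1 -> 0 < delta ->
  (forall i, strongly_measurable mu (e i)) ->
  exists (K : T -> nat) (z : nat -> X),
    [/\ forall k, measurable (K @^-1` [set k]), forall k, `|z k| = 1 &
     \forall t \ae mu, forall (c : 'I_n -> R) lam, 0 <= lam ->
       (1 - eps) * (`|\sum_i c i *: e i t| + lam) <=
         `|\sum_i c i *: e i t + lam *: z (K t)| + 2 * (delta * \sum_i `|c i|)].
Proof.
move=> oct /andP[eps0 eps1] delta0 e_sm.
have [s s_spec] := choice e_sm.
pose W k := \bigcup_(i in [set: 'I_n]) range (s i k).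
have W_fin k : finite_set (W k).
  apply: bigcup_finite; first exact: finite_finset.
  by move=> i _; exact: ((s_spec i).1 k).1.
pose w k : seq X := finmap.enum_fset (fset_set (W k)).
have w_s k i t : s i k t \in w k.
  by rewrite in_fset_set // inE; exists i => //; exists t.
have [z z_spec] := choice (fun k => oct _ (fun j : 'I_(size (w k)) => nth 0 (w k) j) _ eps0).
pose B k := [set t | forall i m, (k <= m)%N -> `|s i m t - s i k t| <= delta].
have B_meas k : measurable (B k).
  have -> : B k = \bigcap_(m in [set m | (k <= m)%N])
      \bigcap_(i in [set: 'I_n]) [set t | `|s i m t - s i k t| <= delta].
    by apply/seteqP; split => [t Bt m km i _|t Bt i m km]; [exact: Bt|exact: Bt].
  apply: bigcap_measurable => [|m _]; first by exists k => /=.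
  apply: fin_bigcap_measurable => [|i _]; first exact: finite_finset.
  exact: simple_fun_preimage [set x | `|x| <= delta]
    (simple_fun_map2 (fun a b => a - b) ((s_spec i).1 m) ((s_spec i).1 k)).
have [K [K_meas K_spec]] := measurable_first_index B_meas.
exists K, z; split => // [k|]; first exact: (z_spec k).1.
have s_cvg : \forall t \ae mu, forall i, s i k t @[k --> \oo] --> e i t.
  by apply: filter_forall => i; exact: (s_spec i).2.
apply: filterS s_cvg => t st c lam lam0.
have B_ex : exists k, B k t.
  have [k Bk] := filter_ex (filter_forall _ (fun i => cvg_stable_near (st i) delta0)).
  by exists k.
apply: (octahedral_witness_approx _ (z_spec (K t)) (fun i => w_s (K t) i t) _ c lam0).
  by rewrite ltW.
by move=> i; exact: cvg_stable_dist_le (st i) (K_spec t B_ex i).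
Qed.

End OctahedralSelector.

Lemma absorb_coercive_error (R : realFieldType) (eps k S a b : R) :
  0 <= eps -> k * S <= a ->
  (1 - eps / 2) * (a + 1) <= b + eps * (k * S) / 2 -> (1 - eps) * (a + 1) <= b.
Proof.
move=> eps0 kSa.
have : eps * (k * S) <= eps * a by rewrite ler_wpM2l.
lra.
Qed.

Section Linfty.
Context d (T : measurableType d) (R : realType) (X : normedModType R)
  (mu : {measure set T -> \bar R}).
Hypothesis mu_pos : (0 < mu setT)%E.
Local Notation V := (Linfty_space (X:=X) mu).
Local Notation N := (Linfty_norm (X:=X) mu).
Local Notation esn f := (ess_sup mu (fun t => (`|f t|)%:E)).

Lemma ess_sup_normr_ge0 (f : T -> X) : (0 <= esn f)%E.
Proof. by apply: ess_sup_ger => // t; rewrite lee_fin. Qed.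

Lemma ess_sup_normr_fin (f : T -> X) : V f -> esn f \is a fin_num.
Proof. by move=> [_ f_fin]; rewrite ge0_fin_numE // ess_sup_normr_ge0. Qed.

Lemma Linfty_normE (f : T -> X) : V f -> (N f)%:E = esn f.
Proof. by move=> Vf; rewrite fineK // ess_sup_normr_fin. Qed.

Lemma ess_sup_normrD (f g : T -> X) : (esn (fun t => f t + g t) <= esn f + esn g)%E.
Proof.
apply: le_trans (ess_supD _ _ _).
by apply: le_ess_sup; apply: nearW => t /=; rewrite lee_fin ler_normD.
Qed.

Lemma ess_sup_normrZ (a : R) (f : T -> X) :
  esn (fun t => a *: f t) = ((`|a|)%:E * esn f)%E.
Proof. by rewrite -ess_supZl //; congr ess_sup; apply: funext => t /=; rewrite normrZ EFinM. Qed.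

Lemma Linfty_space0 : V (fun _ => 0).
Proof.
split; first by apply: strongly_measurable_simple; exact: simple_fun_cst.
by rewrite (_ : (fun _ => _) = cst 0%E) ?ess_sup_cst // funeqE => t; rewrite normr0.
Qed.

Lemma Linfty_spaceD f g : V f -> V g -> V (fun t => f t + g t).
Proof.
move=> Vf Vg; split; first exact: strongly_measurable_map2 add_continuous Vf.1 Vg.1.
apply: le_lt_trans (ess_sup_normrD f g) _.
by rewrite -!Linfty_normE // -EFinD ltry.
Qed.

Lemma Linfty_spaceZ a f : V f -> V (fun t => a *: f t).
Proof.
move=> Vf; split.
  apply: (strongly_measurable_map2 _ _ Vf.1); first exact: scale_continuous.
  by apply: strongly_measurable_simple; exact: simple_fun_cst.
by rewrite ess_sup_normrZ -Linfty_normE // -EFinM ltry.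
Qed.

Lemma Linfty_normD f g : V f -> V g -> N (fun t => f t + g t) <= N f + N g.
Proof.
move=> Vf Vg; rewrite -lee_fin EFinD !Linfty_normE //; first exact: ess_sup_normrD.
exact: Linfty_spaceD.
Qed.

Lemma Linfty_normZ a f : V f -> N (fun t => a *: f t) = `|a| * N f.
Proof. by move=> Vf; rewrite /Linfty_norm ess_sup_normrZ -Linfty_normE. Qed.

Lemma ae_normr_le_Linfty_norm f : V f -> \forall t \ae mu, `|f t| <= N f.
Proof.
move=> Vf; apply: filterS (ess_sup_ge mu (fun t => (`|f t|)%:E)) => t.
by rewrite -Linfty_normE // lee_fin.
Qed.

Lemma Linfty_norm_le_ae f (b : R) : V f ->
  (\forall t \ae mu, `|f t| <= b) -> N f <= b.
Proof.
move=> Vf f_le; rewrite -lee_fin Linfty_normE //.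
by apply/ess_supP; apply: filterS f_le => t; rewrite lee_fin.
Qed.

Lemma Linfty_coercive_witness : octahedral X ->
  forall n (e : 'I_n -> T -> X), (forall i, V (e i)) -> l1_coercive N e ->
  forall eps, 0 < eps <= 1 -> exists y, octahedral_fun_witness V N e eps y.
Proof.
move=> oct n e Ve [k k0 ke] eps /andP[eps0 eps1].
(* [delta] turns the pointwise error [2 * (delta * S)] into [eps * (k * S) / 2]. *)
have [||K [z [K_meas z1 z_oct]]] :=
  octahedral_selector (eps := eps / 2) (delta := eps * k / 4) oct _ _ (fun i => (Ve i).1).
- by rewrite divr_gt0 //=; lra.
- by rewrite divr_gt0 ?mulr_gt0.
pose y t := z (K t).
have y_norm : esn y = 1%:E.
  by rewrite (_ : (fun t => _) = cst 1%:E) ?ess_sup_cst //; apply: funext => t; rewrite z1.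
have Vy : V y by split; [exact: strongly_measurable_nat_valued|rewrite y_norm ltry].
exists y; split => //; split => [|c]; first by rewrite /Linfty_norm y_norm.
have VF := lincomb_in Linfty_space0 Linfty_spaceD Linfty_spaceZ c Ve.
apply: (absorb_coercive_error (ltW eps0) (ke c)).
have eps2 : 0 < 1 - eps / 2 by lra.
rewrite mulrC -ler_pdivlMr // -lerBrDr; apply: Linfty_norm_le_ae => //.
apply: filterS2 z_oct (ae_normr_le_Linfty_norm (Linfty_spaceD VF Vy)) => t oct_t Fy_le.
rewrite lerBrDr ler_pdivlMr // mulrC; apply: le_trans (oct_t c 1 ler01) _.
by rewrite scale1r lerD // le_eqVlt; apply/orP; left; apply/eqP; field.
Qed.

End Linfty.

Lemma sigma_finite_pos_finite_set d (T : measurableType d) (R : realType)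
    (mu : {measure set T -> \bar R}) :
  sigma_finite setT mu -> (0 < mu setT)%E ->
  exists A, [/\ measurable A, (0 < mu A)%E & (mu A < +oo)%E].
Proof.
move=> [F FE F_fin] mu_pos; apply: contrapT => no_A.
have F0 k : mu (F k) = 0%E.
  apply/eqP; rewrite eq_le measure_ge0 andbT leNgt; apply/negP => Fk.
  by apply: no_A; exists (F k); split; [exact: (F_fin k).1| |exact: (F_fin k).2].
have /(negligibleP mu measurableT) mu0 : mu.-negligible setT.
  by rewrite FE; apply: negligible_bigcup => k; apply/(negligibleP mu (F_fin k).1); exact: F0.
by move: mu_pos; rewrite mu0 ltxx.
Qed.

Section L1.
Context d (T : measurableType d) (R : realType) (X : normedModType R)
  (mu : {measure set T -> \bar R}).
Hypothesis mu_complete : measure_is_complete mu.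
Local Notation V := (L1_space (X:=X) mu).
Local Notation N := (L1_norm (X:=X) mu).
Local Notation intn f := (\int[mu]_t (`|f t|)%:E)%E.

Lemma integral_normr_ge0 (f : T -> X) : (0 <= intn f)%E.
Proof. by apply: integral_ge0 => t _; rewrite lee_fin. Qed.

Lemma L1_normE (f : T -> X) : V f -> (N f)%:E = intn f.
Proof. by move=> [_ f_fin]; rewrite fineK // ge0_fin_numE // integral_normr_ge0. Qed.

Lemma measurable_normr_EFin (f : T -> X) : strongly_measurable mu f ->
  measurable_fun setT (fun t => (`|f t|)%:E).
Proof.
by move=> f_sm; apply/measurable_EFinP; exact: measurable_normr_strongly_measurable f_sm.
Qed.

Lemma integral_normrD (f g : T -> X) :
  strongly_measurable mu f -> strongly_measurable mu g ->
  (intn (fun t => f t + g t) <= intn f + intn g)%E.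
Proof.
move=> f_sm g_sm; rewrite -ge0_integralD //; last 2 first.
- exact: measurable_normr_EFin.
- exact: measurable_normr_EFin.
apply: ge0_le_integral => //.
- exact: measurable_normr_EFin (strongly_measurable_map2 add_continuous f_sm g_sm).
- by apply: emeasurable_funD; exact: measurable_normr_EFin.
by move=> t _; rewrite -EFinD lee_fin ler_normD.
Qed.

Lemma integral_normrZ (a : R) (f : T -> X) : strongly_measurable mu f ->
  intn (fun t => a *: f t) = ((`|a|)%:E * intn f)%E.
Proof.
move=> f_sm; rewrite -ge0_integralZl_EFin //; last exact: measurable_normr_EFin.
by congr integral; apply: funext => t; rewrite normrZ EFinM.
Qed.

Lemma L1_space0 : V (fun _ => 0).
Proof.
split; first by apply: strongly_measurable_simple; exact: simple_fun_cst.
by rewrite (_ : (fun _ => _) = cst 0%E) ?integral0 // funeqE => t; rewrite normr0.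
Qed.

Lemma L1_spaceD f g : V f -> V g -> V (fun t => f t + g t).
Proof.
move=> Vf Vg; split; first exact: strongly_measurable_map2 add_continuous Vf.1 Vg.1.
by apply: le_lt_trans (integral_normrD Vf.1 Vg.1) _; rewrite -!L1_normE // -EFinD ltry.
Qed.

Lemma L1_spaceZ a f : V f -> V (fun t => a *: f t).
Proof.
move=> Vf; split.
  apply: (strongly_measurable_map2 _ _ Vf.1); first exact: scale_continuous.
  by apply: strongly_measurable_simple; exact: simple_fun_cst.
by rewrite (integral_normrZ _ Vf.1) -L1_normE // -EFinM ltry.
Qed.

Lemma L1_normD f g : V f -> V g -> N (fun t => f t + g t) <= N f + N g.
Proof.
move=> Vf Vg; rewrite -lee_fin EFinD !L1_normE //; last exact: L1_spaceD.
exact: integral_normrD Vf.1 Vg.1.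
Qed.

Lemma L1_normZ a f : V f -> N (fun t => a *: f t) = `|a| * N f.
Proof. by move=> Vf; rewrite /L1_norm (integral_normrZ _ Vf.1) -L1_normE. Qed.

Lemma measurable_affine_normr (f : T -> X) A (a b : R) :
  strongly_measurable mu f -> measurable A ->
  measurable_fun setT (fun t => (a * `|f t| + b * \1_A t)%:E).
Proof.
move=> f_sm mA; apply/measurable_EFinP.
apply: measurable_funD; apply: measurable_funM => //.
exact: measurable_normr_strongly_measurable f_sm.
Qed.

Lemma integral_affine_normr (f : T -> X) A (a b : R) :
  V f -> measurable A -> (mu A < +oo)%E -> 0 <= a -> 0 <= b ->
  (\int[mu]_t (a * `|f t| + b * \1_A t)%:E)%E = (a * N f + b * fine (mu A))%:E.
Proof.
move=> Vf mA muA a0 b0; under eq_integral do rewrite EFinD.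
rewrite ge0_integralD //; first last.
- by apply/measurable_EFinP; apply: measurable_funM => //; exact: measurable_indic.
- by move=> t _; rewrite lee_fin mulr_ge0 // indicE ler0n.
- apply/measurable_EFinP; apply: measurable_funM => //.
  exact: measurable_normr_strongly_measurable Vf.1.
- by move=> t _; rewrite lee_fin mulr_ge0.
under eq_integral do rewrite EFinM.
rewrite ge0_integralZl_EFin //; last exact: measurable_normr_EFin Vf.1.
under [X in (_ + X)%E]eq_integral do rewrite EFinM.
rewrite ge0_integralZl_EFin //; last by apply/measurable_EFinP; exact: measurable_indic.
by rewrite integral_indic // setIT -(L1_normE Vf) -[mu A]fineK ?ge0_fin_numE.
Qed.

Lemma L1_norm_affine_le_ae (f g : T -> X) A (a b a' b' : R) :
  V f -> V g -> measurable A -> (mu A < +oo)%E ->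
  0 <= a -> 0 <= b -> 0 <= a' -> 0 <= b' ->
  (\forall t \ae mu, a * `|f t| + b * \1_A t <= a' * `|g t| + b' * \1_A t) ->
  a * N f + b * fine (mu A) <= a' * N g + b' * fine (mu A).
Proof.
move=> Vf Vg mA muA a0 b0 a'0 b'0 fg; rewrite -lee_fin -!integral_affine_normr //.
apply: ae_ge0_le_integral => //.
- by move=> t _; rewrite lee_fin addr_ge0 ?mulr_ge0 // indicE ler0n.
- exact: measurable_affine_normr Vf.1 mA.
- by move=> t _; rewrite lee_fin addr_ge0 ?mulr_ge0 // indicE ler0n.
- exact: measurable_affine_normr Vg.1 mA.
by apply: filterS fg => t fg_t _; rewrite lee_fin.
Qed.

Lemma L1_indic_scale_nat_valued (A : set T) (K : T -> nat) (z : nat -> X) (b : R) :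
  measurable A -> (mu A < +oo)%E -> 0 <= b ->
  (forall k, measurable (K @^-1` [set k])) -> (forall k, `|z k| = 1) ->
  let y t := (b * \1_A t) *: z (K t) in V y /\ N y = b * fine (mu A).
Proof.
move=> mA muA b0 K_meas z1 y.
have y_int : (\int[mu]_t (`|y t|)%:E)%E = (b * fine (mu A))%:E.
  have -> : (b * fine (mu A))%:E = (0 * N (fun _ => 0) + b * fine (mu A))%:E.
    by rewrite mul0r add0r.
  rewrite -integral_affine_normr //; first apply: eq_integral => t _; last exact: L1_space0.
  by rewrite mul0r add0r normrZ z1 mulr1 ger0_norm // mulr_ge0 // indicE ler0n.
have y_sm : strongly_measurable mu y.
  have scale_sm : strongly_measurable mu (fun t => b * \1_A t).
    apply: strongly_measurable_simple.
    exact: (@simple_fun_map2 _ T R R R R *%R _ _ (simple_fun_cst T b) (simple_fun_indic R mA)).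
  exact: strongly_measurable_map2 scale_continuous scale_sm
    (strongly_measurable_nat_valued mu z K_meas).
by split; [split; [|rewrite y_int ltry]|rewrite /L1_norm y_int].
Qed.

Lemma L1_coercive_witness : octahedral X -> sigma_finite setT mu -> (0 < mu setT)%E ->
  forall n (e : 'I_n -> T -> X), (forall i, V (e i)) -> l1_coercive N e ->
  forall eps, 0 < eps <= 1 -> exists y, octahedral_fun_witness V N e eps y.
Proof.
move=> oct mu_sf mu_pos n e Ve [k k0 ke] eps /andP[eps0 eps1].
have [A [mA muA0 muA]] := sigma_finite_pos_finite_set mu_sf mu_pos.
have muAE : mu A = (fine (mu A))%:E by rewrite fineK // ge0_fin_numE.
set m := fine (mu A); have m0 : 0 < m by rewrite -lte_fin -muAE.
pose delta := eps * k / (4 * m).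
have [||K [z [K_meas z1 z_oct]]] :=
  octahedral_selector (eps := eps / 2) (delta := delta) oct _ _ (fun i => (Ve i).1).
- by rewrite divr_gt0 //=; lra.
- by rewrite divr_gt0 ?mulr_gt0.
have minv0 : 0 <= m^-1 by rewrite invr_ge0 ltW.
have [Vy Ny] := L1_indic_scale_nat_valued mA muA minv0 K_meas z1.
set y := fun t => _ in Vy Ny.
exists y; split => //; split => [|c]; first by rewrite Ny mulVf ?gt_eqF.
have VF := lincomb_in L1_space0 L1_spaceD L1_spaceZ c Ve.
set S := \sum_i `|c i|.
have key : (1 - eps / 2) * N (lincomb c e) + (1 - eps / 2) / m * m <=
    1 * N (fun t => lincomb c e t + y t) + 2 * (delta * S) * m.
  apply: L1_norm_affine_le_ae => //; first exact: L1_spaceD.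
  - by rewrite subr_ge0; lra.
  - by rewrite divr_ge0 ?(ltW m0) // subr_ge0; lra.
  - by rewrite !mulr_ge0 ?sumr_ge0 ?(ltW k0) ?(ltW eps0) // invr_ge0 mulr_ge0 ?(ltW m0).
  apply: filterS z_oct => t oct_t; rewrite /y indicE.
  case: (t \in A); rewrite ?mulr1 ?mul1r ?mulr0 ?scale0r ?addr0.
    by rewrite -mulrDr; apply: oct_t; rewrite invr_ge0 ltW.
  by rewrite ler_piMl // lerBlDr lerDl divr_ge0 ?ltW.
apply: (absorb_coercive_error (ltW eps0) (ke c)).
have E : 2 * (delta * S) * m = eps * (k * S) / 2 by rewrite /delta; field; rewrite gt_eqF.
by rewrite divfK ?gt_eqF // E mul1r -{2}(mulr1 (1 - eps / 2)) -mulrDr in key.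
Qed.

End L1.

Unset Implicit Arguments.

Theorem proposition4p2 (d : measure_display) (T : measurableType d)
  (R : realType) (mu : {measure set T -> \bar R})
  (X : completeNormedModType R) :
  measure_is_complete mu ->
  sigma_finite setT mu ->
  (0 < mu setT)%E ->
  octahedral X ->
  octahedral_fun (L1_space (X:=X) mu) (L1_norm (X:=X) mu) /\
  octahedral_fun (Linfty_space (X:=X) mu) (Linfty_norm (X:=X) mu).
Proof.
move=> mu_complete mu_sf mu_pos oct; split.
  apply: octahedral_fun_of_coercive.
  - exact: L1_space0.
  - exact: L1_spaceD.
  - exact: L1_spaceZ.
  - exact: L1_normD.
  - exact: L1_normZ.
  - exact: L1_coercive_witness.
apply: octahedral_fun_of_coercive.
- exact: Linfty_space0.
- exact: Linfty_spaceD.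
- exact: Linfty_spaceZ.
- exact: Linfty_normD.
- exact: Linfty_normZ.
- exact: Linfty_coercive_witness.
Qed.
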